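(* Let the setting be as in the context. For any function $\Phi:\omega_{h\widehat1}\times\{t_m\}_{m\ge0}\to\mathbb C$ with $\Phi^0=0$ and any $M\ge1$, \[ \mathrm{Im}\sum_{m=1}^M\Bigl(\mathcal S^m_{\rm ref}\mathbf\Phi^m,\ \frac{\Phi^{m-1}+\Phi^m}{2}\Bigr)_{\omega_{h\widehat1}}\tau\ \ge\ 0 . \]
   Context: Let $n\ge2$, $\hbar>0$, $c_\hbar>0$, $V_\infty\in\mathbb R$, $\tau>0$ and $t_m=m\tau$. Let $X_1,\dots,X_n>0$, integers $J_k\ge2$, $h_k=X_k/J_k$; $\omega_{h\widehat1}=\{(j_2h_2,\dots,j_nh_n):1\le j_k\le J_k-1\}$, with inner product $(U,W)_{\omega_{h\widehat1}}=\sum_{j_2=1}^{J_2-1}\cdots\sum_{j_n=1}^{J_n-1}U_{j_2,\dots,j_n}W^*_{j_2,\dots,j_n}h_2\cdots h_n$. Discrete sine transform in $x_k$ ($k\ge2$): $(\mathcal F_kP)^{(q)}=\frac2{J_k}\sum_{j=1}^{J_k-1}P_j\sin\frac{\pi qj}{J_k}$, $(\mathcal F_k^{-1}P^{(\cdot)})_j=\sum_{q=1}^{J_k-1}P^{(q)}\sin\frac{\pi qj}{J_k}$; $\lambda^{(k)}_q=\bigl(\frac2{h_k}\sin\frac{\pi qh_k}{2X_k}\bigr)^2$, $\sigma^{(k)}_q=1-\frac13\sin^2\frac{\pi qh_k}{2X_k}$. Discrete convolution $(R*Q)^m=\sum_{p=0}^mR^pQ^{m-p}$. With $\mathbf\Phi^m=\{\Phi^0,\dots,\Phi^m\}$,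 $\Phi^{\mathbf q}=(\mathcal F_n\cdots(\mathcal F_2\Phi)^{(q_2)}\cdots)^{(q_n)}$ for $\mathbf q=(q_2,\dots,q_n)$, $1\le q_k\le J_k-1$, define $\mathcal S^m_{\rm ref}\mathbf\Phi^m=\mathcal F_2^{-1}\cdots\mathcal F_n^{-1}\bigl[\sigma^{(2)}_{q_2}\cdots\sigma^{(n)}_{q_n}(R_{\mathbf q}*\Phi^{\mathbf q})^m\bigr]$, where $R_{\mathbf q}=R[V_{\infty,\mathbf q}]$ with $V_{\infty,\mathbf q}=V_\infty+c_\hbar\sum_{k=2}^n\lambda^{(k)}_{q_k}/\sigma^{(k)}_{q_k}$. For real $W_\infty$, $R[W_\infty]=(R^m)_{m\ge0}$ is given by $R^0=c_1$, $R^1=-c_1\varkappa\mu$, $R^m=\frac{2m-3}{m}\varkappa\mu R^{m-1}-\frac{m-3}{m}\varkappa^2R^{m-2}$ for $m\ge2$, where $a=\frac{W_\infty}{2c_\hbar}+i\frac{\hbar}{\tau c_\hbar}$, $\alpha=2a+\frac23h_1^2a^2\ (\ne0)$, $\arg\alpha\in(0,2\pi)$, $\beta=2\,\mathrm{Re}\,a+\frac23h_1^2|a|^2$, $c_1=-\frac{|\alpha|^{1/2}}2e^{-i(\arg\alpha)/2}$, $\varkappa=-e^{i\arg\alpha}$, $\mu=\beta/|\alpha|\in(-1,1)$. *)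

From HB Require Import structures.
From mathcomp Require Import all_boot all_order all_algebra.
From mathcomp Require Import complex.
From mathcomp Require Import reals trigo.
From Stdlib Require Import ClassicalEpsilon.

Set Implicit Arguments.
Unset Strict Implicit.
Unset Printing Implicit Defensive.

Import Order.TTheory GRing.Theory Num.Theory.
Local Open Scope ring_scope.
Local Open Scope complex_scope.

Section Defs.
Variable R : realType.

Definition cabs (z : R[i]) : R := Num.sqrt (complex.Re z ^+ 2 + complex.Im z ^+ 2).

Definition cexpi (t : R) : R[i] := cos t +i* sin t.

(* the argument of z taken in (0, 2 pi): the theta in (0,2pi) with
   z = |z| e^{i theta} (chosen by Hilbert's epsilon; unique when it exists) *)
Definition arg02pi (z : R[i]) : R :=
  epsilon (inhabits 0)
    (fun t : R => 0 < t < 2 * pi /\ z = (cabs z)%:C * cexpi t).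

Variables (hbar chbar tau h1 : R).

Definition acoef (W : R) : R[i] := (W / (2 * chbar)) +i* (hbar / (tau * chbar)).
Definition alphac (W : R) : R[i] :=
  2 * acoef W + (2 / 3 * h1 ^+ 2)%:C * acoef W ^+ 2.
Definition betac (W : R) : R :=
  2 * complex.Re (acoef W) + 2 / 3 * h1 ^+ 2 * cabs (acoef W) ^+ 2.
Definition c1coef (W : R) : R[i] :=
  - (Num.sqrt (cabs (alphac W)) / 2)%:C * cexpi (- arg02pi (alphac W) / 2).
Definition kappac (W : R) : R[i] := - cexpi (arg02pi (alphac W)).
Definition muc (W : R) : R := betac W / cabs (alphac W).

Fixpoint Rpair (W : R) (m : nat) : R[i] * R[i] :=
  match m with
  | 0%N => (c1coef W, - c1coef W * kappac W * (muc W)%:C)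
  | m'.+1 =>
      let: (r0, r1) := Rpair W m' in
      let k := (m'.+2)%N in
      (r1, ((2 * k%:R - 3) / k%:R)%:C * kappac W * (muc W)%:C * r1
           - ((k%:R - 3) / k%:R)%:C * kappac W ^+ 2 * r0)
  end.

Definition Rseq (W : R) (m : nat) : R[i] := (Rpair W m).1.

End Defs.

Definition dconv (R : realType) (A B : nat -> R[i]) (m : nat) : R[i] :=
  \sum_(p < m.+1) A p * B (m - p)%N.

Local Open Scope ring_scope.
Local Open Scope complex_scope.

(* Transverse directions x_2, ..., x_n: the transverse direction with index
   k : 'I_n.-1 is x_{k+2}.  X l, J l are X_l, J_l for 1 <= l <= n. *)

Definition midx (n : nat) (J : nat -> nat) : finType :=
  {dffun forall k : 'I_n.-1, 'I_(J k.+2)}.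

(* interior multi-indices: 1 <= j_l <= J_l - 1 for all l = 2..n,
   i.e. the points of omega_{h,hat1} (resp. the admissible q) *)
Definition interior (n : nat) (J : nat -> nat) (j : midx n J) : bool :=
  [forall k, (0 < j k)%N].

Section Grid.
Variables (R : realType) (n : nat) (X : nat -> R) (J : nat -> nat).

Definition hstep (l : nat) : R := X l / (J l)%:R.

Definition sinprod (q j : midx n J) : R :=
  \prod_(k < n.-1) sin (pi * (q k)%:R * (j k)%:R / (J k.+2)%:R).

(* Phi^q = (F_n ... (F_2 Phi)^(q_2) ... )^(q_n)  (composition of the 1-D
   discrete sine transforms, written as the nested sums) *)
Definition dst (P : midx n J -> R[i]) (q : midx n J) : R[i] :=
  (\prod_(k < n.-1) (2 / (J k.+2)%:R))%:C *
  \sum_(j | interior j) P j * (sinprod q j)%:C.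

Definition idst (P : midx n J -> R[i]) (j : midx n J) : R[i] :=
  \sum_(q | interior q) P q * (sinprod q j)%:C.

Definition lambdak (l q : nat) : R :=
  (2 / hstep l * sin (pi * q%:R * hstep l / (2 * X l))) ^+ 2.
Definition sigmak (l q : nat) : R :=
  1 - 1 / 3 * sin (pi * q%:R * hstep l / (2 * X l)) ^+ 2.

Definition ip (U W : midx n J -> R[i]) : R[i] :=
  \sum_(j | interior j) U j * conjc (W j) * (\prod_(k < n.-1) hstep k.+2)%:C.

Variables (hbar chbar Vinf tau : R).

Definition Vq (q : midx n J) : R :=
  Vinf + chbar * \sum_(k < n.-1) lambdak k.+2 (q k) / sigmak k.+2 (q k).

Definition Sref (Phi : nat -> midx n J -> R[i]) (m : nat) : midx n J -> R[i] :=
  idst (fun q =>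
    (\prod_(k < n.-1) sigmak k.+2 (q k))%:C *
    dconv (Rseq hbar chbar tau (hstep 1) (Vq q)) (fun p => dst (Phi p) q) m).

End Grid.

From HB Require Import structures.
From mathcomp Require Import all_boot all_order all_algebra.
From mathcomp Require Import complex.
From mathcomp Require Import reals trigo.
From mathcomp Require Import boolp.
From mathcomp Require Import ring lra zify.
From Stdlib Require Import ClassicalEpsilon.

Set Implicit Arguments.
Unset Strict Implicit.
Unset Printing Implicit Defensive.
Import Order.TTheory GRing.Theory Num.Theory.
Local Open Scope ring_scope.

(* Identify a sequence [u] with the formal power series [sum_m u_m z^m], so
   that discrete convolution becomes multiplication.  The recurrence defining
   [R[W]] makes its generating function [F] satisfy the linear ODE
   [2 Q F' = Q' F] with [Q = 1 - 2 kappa mu z + kappa^2 z^2], hence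
   [F^2 = c_1^2 Q]; in polar form of [alpha] this quadratic, rescaled by
   [4 / h_1^2], is [K^2 - D^2] for two linear polynomials [D], [K] in [z], and
   [L = (2 / h_1) F] has [Im L_0 > 0].
   For such [L] the sum [Im sum_{m<=M} (L phi)_m conj (((1 + z) phi)_m)] is
   nonnegative: [q = (L + K) / D] satisfies [|q_0| < 1] and, by a discrete
   energy identity, [phi |-> q phi] does not increase it; the Moebius
   substitution [phi = (1 - conj q_0 q) psi] then trades [phi] for a series
   with one more vanishing coefficient, up to the factor [1 - |q_0|^2 > 0].
   Finally the discrete sine transform diagonalizes [S_ref] and the inner
   product, so the theorem is a nonnegative combination of these
   one-dimensional estimates, one for each mode [q]. *)

(** * Formal power series *)

Section FormalPowerSeries.
Variable F : comNzRingType.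

Record fps := Fps { fcoef : nat -> F }.
HB.instance Definition _ := gen_eqMixin fps.
HB.instance Definition _ := gen_choiceMixin fps.

Lemma fps_ext (a b : fps) : fcoef a =1 fcoef b -> a = b.
Proof. by case: a b => [a] [b] /= eq_ab; congr Fps; apply/funext. Qed.

Let fps0 := Fps (fun _ => 0).
Let fps_opp (a : fps) := Fps (fun i => - fcoef a i).
Let fps_add (a b : fps) := Fps (fun i => fcoef a i + fcoef b i).

Let fps_addA : associative fps_add.
Proof. by move=> a b c; apply: fps_ext => i /=; rewrite addrA. Qed.
Let fps_addC : commutative fps_add.
Proof. by move=> a b; apply: fps_ext => i /=; rewrite addrC. Qed.
Let fps_add0 : left_id fps0 fps_add.
Proof. by move=> a; apply: fps_ext => i /=; rewrite add0r. Qed.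
Let fps_addN : left_inverse fps0 fps_opp fps_add.
Proof. by move=> a; apply: fps_ext => i /=; rewrite addNr. Qed.

HB.instance Definition _ :=
  GRing.isZmodule.Build fps fps_addA fps_addC fps_add0 fps_addN.

Definition conv (a b : nat -> F) (m : nat) : F :=
  \sum_(p < m.+1) a p * b (m - p)%N.

Definition fps_trunc (a : nat -> F) (m : nat) : {poly F} := \poly_(i < m.+1) a i.

(* Convolution is read off products of truncations, which transfers
   commutativity and associativity from polynomials. *)
Lemma conv_trunc (a b : nat -> F) m k : (k <= m)%N ->
  conv a b k = (fps_trunc a m * fps_trunc b m)`_k.
Proof.
move=> le_km; rewrite coefM; apply: eq_bigr => i _; rewrite !coef_poly.
have le_ik : (i <= k)%N by rewrite -ltnS.
by rewrite !ifT // ltnS (leq_trans _ le_km) // leq_subr.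
Qed.

Lemma coefM_trunc (p q : {poly F}) (a : nat -> F) m :
  {in [pred k | (k <= m)%N], forall k, p`_k = a k} ->
  (q * p)`_m = (q * fps_trunc a m)`_m.
Proof.
move=> eq_pa; rewrite !coefM; apply: eq_bigr => i _.
by rewrite coef_poly ltnS leq_subr eq_pa // inE leq_subr.
Qed.

Lemma convC (a b : nat -> F) m : conv a b m = conv b a m.
Proof. by rewrite !(conv_trunc _ _ (leqnn m)) mulrC. Qed.

Lemma convA (a b c : nat -> F) m : conv a (conv b c) m = conv (conv a b) c m.
Proof.
rewrite (conv_trunc _ _ (leqnn m)) (conv_trunc (conv a b) c (leqnn m)).
rewrite -(@coefM_trunc (fps_trunc b m * fps_trunc c m)); last first.
  by move=> k le_km; rewrite (conv_trunc _ _ le_km).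
rewrite [fps_trunc (conv a b) m * _]mulrC.
rewrite -(@coefM_trunc (fps_trunc a m * fps_trunc b m)); last first.
  by move=> k le_km; rewrite (conv_trunc _ _ le_km).
by rewrite mulrA [_ * fps_trunc c m]mulrC mulrA.
Qed.

Let fps_mul (a b : fps) := Fps (conv (fcoef a) (fcoef b)).
Let fps1 := Fps (fun i => (i == 0%N)%:R).

Let fps_mulA : associative fps_mul.
Proof. by move=> a b c; apply: fps_ext => i /=; rewrite convA. Qed.
Let fps_mulC : commutative fps_mul.
Proof. by move=> a b; apply: fps_ext => i /=; rewrite convC. Qed.
Let fps_mul1 : left_id fps1 fps_mul.
Proof.
move=> a; apply: fps_ext => i /=; rewrite /conv big_ord_recl mul1r subn0.
by rewrite big1 ?addr0 // => j _; rewrite mul0r.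
Qed.
Let fps_mulDl : left_distributive fps_mul +%R.
Proof.
move=> a b c; apply: fps_ext => i /=; rewrite /conv -big_split /=.
by apply: eq_bigr => j _; rewrite mulrDl.
Qed.
Let fps1_neq0 : fps1 != 0.
Proof. by apply/eqP => /(congr1 (fcoef^~ 0%N)) /= /eqP; rewrite oner_eq0. Qed.

HB.instance Definition _ := GRing.Zmodule_isComNzRing.Build fps
  fps_mulA fps_mulC fps_mul1 fps_mulDl fps1_neq0.

Lemma fcoefD (a b : fps) i : fcoef (a + b) i = fcoef a i + fcoef b i.
Proof. by []. Qed.
Lemma fcoefN (a : fps) i : fcoef (- a) i = - fcoef a i. Proof. by []. Qed.
Lemma fcoefB (a b : fps) i : fcoef (a - b) i = fcoef a i - fcoef b i.
Proof. by []. Qed.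
Lemma fcoef0 i : fcoef 0 i = 0. Proof. by []. Qed.
Lemma fcoef1 i : fcoef 1 i = (i == 0%N)%:R. Proof. by []. Qed.
Lemma fcoefM (a b : fps) i : fcoef (a * b) i = conv (fcoef a) (fcoef b) i.
Proof. by []. Qed.

Lemma fcoefM0 (a b : fps) : fcoef (a * b) 0 = fcoef a 0 * fcoef b 0.
Proof. by rewrite fcoefM /conv big_ord1. Qed.

Definition fpsC (c : F) : fps := Fps (fun i => (i == 0%N)%:R * c).
Definition fpsX : fps := Fps (fun i => (i == 1%N)%:R).

Lemma fcoefC c i : fcoef (fpsC c) i = (i == 0%N)%:R * c. Proof. by []. Qed.

Lemma fcoefCM c (a : fps) i : fcoef (fpsC c * a) i = c * fcoef a i.
Proof.
rewrite fcoefM /conv big_ord_recl big1 => [|j _]; last by rewrite /= !mul0r.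
by rewrite /= mul1r subn0 addr0.
Qed.

Lemma fcoefXM (a : fps) i :
  fcoef (fpsX * a) i = if i is j.+1 then fcoef a j else 0.
Proof.
rewrite fcoefM /conv; case: i => [|i]; first by rewrite big_ord1 /= mul0r.
rewrite 2!big_ord_recl /= mul0r add0r mul1r subSS subn0.
by rewrite big1 ?addr0 // => j _; rewrite mul0r.
Qed.

Let fpsC_is_zmod_morphism : zmod_morphism fpsC.
Proof. by move=> a b; apply: fps_ext => i /=; rewrite mulrBr. Qed.
HB.instance Definition _ := GRing.isZmodMorphism.Build F fps fpsC
  fpsC_is_zmod_morphism.

Let fpsC_is_monoid_morphism : monoid_morphism fpsC.
Proof.
split; first by apply: fps_ext => i /=; rewrite mulr1.
by move=> a b; apply: fps_ext => i; rewrite fcoefCM /= mulrCA.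
Qed.
HB.instance Definition _ := GRing.isMonoidMorphism.Build F fps fpsC
  fpsC_is_monoid_morphism.

Lemma fcoef_lin (a b : F) (x : fps) m :
  fcoef ((fpsC a + fpsC b * fpsX) * x) m.+1 = a * fcoef x m.+1 + b * fcoef x m.
Proof. by rewrite mulrDl fcoefD -mulrA !fcoefCM fcoefXM. Qed.

Lemma fcoef_lin0 (a b : F) : fcoef (fpsC a + fpsC b * fpsX) 0 = a.
Proof. by rewrite fcoefD fcoefM0 /= mul1r mulr0 addr0. Qed.

Definition vanish_below (k : nat) (a : fps) := forall j, (j < k)%N -> fcoef a j = 0.

Lemma vanish_below_le k k' a : (k' <= k)%N -> vanish_below k a -> vanish_below k' a.
Proof. by move=> le_k'k a_k j lt_jk'; apply: a_k; apply: leq_trans le_k'k. Qed.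

Lemma vanish_belowMl k (a b : fps) : vanish_below k b -> vanish_below k (a * b).
Proof.
move=> b_k j lt_jk; rewrite fcoefM /conv big1 // => p _.
by rewrite b_k ?mulr0 // (leq_ltn_trans (leq_subr _ _) lt_jk).
Qed.

Lemma vanish_belowM_S k (a b : fps) :
  fcoef a 0 = 0 -> vanish_below k b -> vanish_below k.+1 (a * b).
Proof.
move=> a0 b_k j lt_jk; rewrite fcoefM /conv big1 // => p _.
have [->|p_gt0] := posnP p; first by rewrite a0 mul0r.
by rewrite b_k ?mulr0 //; have := ltn_ord p; lia.
Qed.

End FormalPowerSeries.

Section FpsInverse.
Variable F : comUnitRingType.
Local Notation fps := (fps F).

Fixpoint inv_coefs (u : nat -> F) (n : nat) : seq F :=
  if n is n'.+1 then
    let s := inv_coefs u n' in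
    rcons s (- (u 0%N)^-1 * \sum_(i < n'.+1) u i.+1 * nth 0 s (n' - i))
  else [:: (u 0%N)^-1].

Lemma size_inv_coefs u n : size (inv_coefs u n) = n.+1.
Proof. by elim: n => //= n IHn; rewrite size_rcons IHn. Qed.

Lemma nth_inv_coefs u n i :
  (i <= n)%N -> nth 0 (inv_coefs u n) i = nth 0 (inv_coefs u i) i.
Proof.
elim: n => [|n IHn]; first by rewrite leqn0 => /eqP ->.
rewrite leq_eqVlt => /predU1P [-> //|]; rewrite ltnS => le_in.
by rewrite /= nth_rcons size_inv_coefs ltnS le_in IHn.
Qed.

Definition fps_inv (u : fps) : fps :=
  Fps (fun m => nth 0 (inv_coefs (fcoef u) m) m).

Lemma fps_mulV (u : fps) : fcoef u 0 \is a GRing.unit -> u * fps_inv u = 1.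
Proof.
move=> u0; apply: fps_ext => -[|m]; rewrite fcoefM fcoef1 /conv.
  by rewrite big_ord1 /= mulrV.
rewrite big_ord_recl /= subn0 nth_rcons size_inv_coefs ltnn eqxx.
rewrite mulrA mulrN mulrV // mulN1r; apply/eqP; rewrite addrC subr_eq0; apply/eqP.
apply: eq_bigr => i _.
by rewrite /bump /= add1n subSS [in RHS]nth_inv_coefs // leq_subr.
Qed.

End FpsInverse.

Section FpsDerivative.
Variable F : comNzRingType.
Local Notation fps := (fps F).

Definition fps_deriv (a : fps) : fps := Fps (fun m => m.+1%:R * fcoef a m.+1).

Lemma fcoef_deriv a m : fcoef (fps_deriv a) m = m.+1%:R * fcoef a m.+1.
Proof. by []. Qed.

Lemma fps_derivB a b : fps_deriv (a - b) = fps_deriv a - fps_deriv b.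
Proof. by apply: fps_ext => m; rewrite fcoefB !fcoef_deriv fcoefB mulrBr. Qed.

Lemma fps_derivCM c a : fps_deriv (fpsC c * a) = fpsC c * fps_deriv a.
Proof. by apply: fps_ext => m; rewrite fcoefCM !fcoef_deriv fcoefCM mulrCA. Qed.

Lemma fps_derivM a b : fps_deriv (a * b) = fps_deriv a * b + a * fps_deriv b.
Proof.
apply: fps_ext => m; rewrite fcoefD !fcoefM fcoef_deriv fcoefM /conv.
transitivity (\sum_(i < m.+2) i%:R * (fcoef a i * fcoef b (m.+1 - i))
     + \sum_(i < m.+2) (m.+1 - i)%:R * (fcoef a i * fcoef b (m.+1 - i))).
  rewrite big_distrr -big_split /=; apply: eq_bigr => i _.
  by rewrite -mulrDl -natrD subnKC // -ltnS.
congr (_ + _).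
  rewrite big_ord_recl mul0r add0r; apply: eq_bigr => i _.
  by rewrite fcoef_deriv lift0 subSS mulrA.
rewrite big_ord_recr /= subnn mul0r addr0; apply: eq_bigr => i _.
have le_im : (i <= m)%N by rewrite -ltnS.
by rewrite subSn // mulrCA.
Qed.

Definition fps_quad (a b c : F) : fps :=
  fpsC a + fpsC b * fpsX F + fpsC c * fpsX F ^+ 2.

Lemma fpsC_quad a b c : fpsC a * fps_quad 1 b c = fps_quad a (a * b) (a * c).
Proof. by rewrite /fps_quad !rmorphM rmorph1; ring. Qed.

Lemma sqr_lin_sub a b c d :
  (fpsC a + fpsC b * fpsX F) ^+ 2 - (fpsC c + fpsC d * fpsX F) ^+ 2
  = fps_quad (a ^+ 2 - c ^+ 2) (2 * (a * b - c * d)) (b ^+ 2 - d ^+ 2).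
Proof. by rewrite /fps_quad !rmorphB !rmorphM ?rmorphXn ?rmorph_nat; ring. Qed.

Lemma fcoef_quadM a b c g m : fcoef (fps_quad a b c * g) m =
  a * fcoef g m + (if m is m'.+1 then b * fcoef g m' else 0)
  + (if m is m'.+2 then c * fcoef g m' else 0).
Proof.
rewrite /fps_quad !mulrDl !fcoefD -!mulrA !fcoefCM !fcoefXM.
by case: m => [|[|m]]; rewrite ?fcoefXM ?mulr0 ?addr0.
Qed.

Lemma fps_deriv_quad a b c :
  fps_deriv (fps_quad a b c) = fpsC b + fpsC (2 * c) * fpsX F.
Proof.
apply: fps_ext => m; rewrite fcoef_deriv -[fps_quad _ _ _]mulr1 fcoef_quadM.
rewrite fcoefD fcoefCM fcoefC !fcoef1.
by case: m => [|[|m]] /=; rewrite ?mulr0 ?mul0r ?mulr1 ?mul1r ?addr0 ?add0r // mulr0.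
Qed.

End FpsDerivative.

Section FpsRecurrence.
Variable F : numDomainType.
Local Notation fps := (fps F).
Local Notation X := (fpsX F).

(* Coefficientwise the equation determines [d_(m+1)] from the lower
   coefficients, because [Q_0 = 1] and [m.+1%:R != 0] in [F]. *)
Lemma fps_quad_ode_uniq (b c : F) (d : fps) : fcoef d 0 = 0 ->
  fps_quad 1 b c * fps_deriv d = (fpsC b + fpsC (2 * c) * X) * d -> d = 0.
Proof.
move=> d0 ode_d.
suff d_eq0 m j : (j <= m)%N -> fcoef d j = 0.
  by apply: fps_ext => m; rewrite (d_eq0 m m) // fcoef0.
elim: m j => [|m IHm] j; first by rewrite leqn0 => /eqP ->.
rewrite leq_eqVlt => /predU1P [->|]; last by rewrite ltnS; exact: IHm.
have := congr1 (fun t => fcoef t m) ode_d.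
rewrite fcoef_quadM !fcoef_deriv mulrDl fcoefD fcoefCM -mulrA fcoefCM fcoefXM mul1r.
case: m IHm => [|[|m]] IHm /=; rewrite ?fcoef_deriv;
  [rewrite d0 | rewrite d0 (IHm 1%N) // | rewrite (IHm m.+1) ?(IHm m.+2) //];
  by rewrite !mulr0 !addr0 => /eqP; rewrite mulf_eq0 pnatr_eq0 => /eqP.
Qed.

(* The recurrence says [2 Q F' = Q' F] for [Q = 1 - 2 ka mu z + ka^2 z^2],
   so [F^2] and [F_0^2 Q] solve the same linear ODE [Q G' = Q' G] with the
   same initial value. *)
Lemma fps_sqr_recurrence (f : nat -> F) (ka mu : F) :
  f 1%N = - f 0%N * ka * mu ->
  (forall i, i.+2%:R * f i.+2 =
      (2 * i.+2%:R - 3) * ka * mu * f i.+1 - (i.+2%:R - 3) * ka ^+ 2 * f i) ->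
  Fps f ^+ 2 = fpsC (f 0%N ^+ 2) * fps_quad 1 (- 2 * ka * mu) (ka ^+ 2).
Proof.
move=> f1 fSS.
set Q := fps_quad _ _ _; set lin := fpsC (- 2 * ka * mu) + fpsC (2 * ka ^+ 2) * X.
have ode_f : 2 * (Q * fps_deriv (Fps f)) = lin * Fps f.
  apply: fps_ext => i; rewrite -(rmorph_nat (@fpsC F)) fcoefCM fcoef_quadM.
  case: i => [|[|i]]; rewrite ?fcoefM0 ?fcoef_lin0 ?fcoef_lin !fcoef_deriv /=.
  - by rewrite f1; ring.
  - by rewrite addr0 !mul1r (fSS 0%N); ring.
  - by rewrite !mul1r (fSS i.+1) !mulrSr; ring.
have ode_sqr : Q * fps_deriv (Fps f ^+ 2) = lin * Fps f ^+ 2.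
  rewrite expr2 fps_derivM mulrA -ode_f; ring.
have ode_quad : Q * fps_deriv (fpsC (f 0%N ^+ 2) * Q) = lin * (fpsC (f 0%N ^+ 2) * Q).
  by rewrite fps_derivCM fps_deriv_quad -/lin; ring.
apply/eqP; rewrite -subr_eq0; apply/eqP.
apply: (@fps_quad_ode_uniq (- 2 * ka * mu) (ka ^+ 2)).
  by rewrite fcoefB fcoefCM -[Q]mulr1 fcoef_quadM fcoef1 expr2 fcoefM0 /=; ring.
by rewrite fps_derivB mulrBr ode_sqr ode_quad -mulrBr.
Qed.

End FpsRecurrence.

Local Open Scope complex_scope.

(** * The one-dimensional energy estimate *)

Section ComplexFacts.
Variable R : rcfType.
Local Notation C := R[i].

Lemma Im_realM (c : R) (a : C) : complex.Im (c%:C * a) = c * complex.Im a.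
Proof. by case: a => ? ? /=; ring. Qed.

Lemma real_complex_eq0 (c : R) : (c%:C == 0 :> C) = (c == 0).
Proof. by apply/eqP/eqP => [[]|->]. Qed.

Lemma complex_neq0 (a b : R) : b != 0 -> a +i* b != 0.
Proof. by move=> b_neq0; apply/eqP => -[_ /eqP]; rewrite (negPf b_neq0). Qed.

(* [rmorphM] and [rmorph_sum] state these with [conjc] coerced from its
   morphism structure, a form that later rewrites do not match. *)
Lemma conjcM (a b : C) : conjc (a * b) = conjc a * conjc b.
Proof. exact: rmorphM. Qed.

Lemma conjc_sum (I : Type) (r : seq I) (P : pred I) (F : I -> C) :
  conjc (\sum_(i <- r | P i) F i) = \sum_(i <- r | P i) conjc (F i).
Proof. exact: rmorph_sum. Qed.

Lemma conjc_mid (a b : C) : conjc ((a + b) / 2) = (conjc a + conjc b) / 2.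
Proof. by rewrite rmorphM rmorphD fmorphV rmorph_nat. Qed.

End ComplexFacts.

Section EnergyEstimate.
Variable R : rcfType.
Local Notation C := R[i].
Local Notation fps := (fps C).
Local Notation X := (fpsX C).

Definition energy (u v : C) : R :=
  5 * (complex.Re u ^+ 2 + complex.Im u ^+ 2)
  + 5 * (complex.Re v ^+ 2 + complex.Im v ^+ 2)
  + 2 * (complex.Re u * complex.Re v + complex.Im u * complex.Im v).

Lemma energy_ge0 u v : 0 <= energy u v.
Proof.
case: u v => a b [c d]; rewrite /energy /=.
have -> : 5 * (a ^+ 2 + b ^+ 2) + 5 * (c ^+ 2 + d ^+ 2) + 2 * (a * c + b * d)
  = 4 * (a ^+ 2 + b ^+ 2 + c ^+ 2 + d ^+ 2) + ((a + c) ^+ 2 + (b + d) ^+ 2) by ring.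
by rewrite addr_ge0 ?mulr_ge0 ?addr_ge0 ?sqr_ge0.
Qed.

Lemma energy00 : energy 0 0 = 0.
Proof. by rewrite /energy /=; ring. Qed.

Lemma Im_energy_step (x w y : R) (u u' v v' : C) :
  complex.Im (((x +i* y) * v + (x -i* y) * v' - ((w -i* (5 * y)) * u
                 + (w +i* (5 * y)) * u')) * conjc (u + u')
    + ((x +i* y) * u + (x -i* y) * u' - ((w -i* (5 * y)) * v
                 + (w +i* (5 * y)) * v')) * conjc (v + v'))
  = y * energy u v - y * energy u' v'.
Proof.
by case: u => a b; case: u' => a' b'; case: v => c d; case: v' => c' d';
  rewrite /energy /=; ring.
Qed.

Definition bform (M : nat) (L a b : fps) : C :=
  \sum_(1 <= m < M.+1) fcoef (L * a) m * conjc (fcoef ((1 + X) * b) m).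

Lemma bformDl M L a b c : bform M L (a + b) c = bform M L a c + bform M L b c.
Proof.
by rewrite /bform -big_split; apply: eq_bigr => m _; rewrite mulrDr fcoefD mulrDl.
Qed.

Lemma bformDr M L a b c : bform M L c (a + b) = bform M L c a + bform M L c b.
Proof.
rewrite /bform -big_split; apply: eq_bigr => m _.
by rewrite mulrDr fcoefD rmorphD mulrDr.
Qed.

Lemma bformCl M L r a c : bform M L (fpsC r * a) c = r * bform M L a c.
Proof.
rewrite /bform big_distrr; apply: eq_bigr => m _.
by rewrite [L * _]mulrCA fcoefCM -mulrA.
Qed.

Lemma bformCr M L r a c : bform M L a (fpsC r * c) = conjc r * bform M L a c.
Proof.
rewrite /bform big_distrr; apply: eq_bigr => m _.
by rewrite [(1 + X) * _]mulrCA fcoefCM rmorphM mulrCA.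
Qed.

Lemma bform_vanish M L a c : vanish_below M.+1 a -> bform M L a c = 0.
Proof.
move=> a_M; rewrite /bform big1_seq // => m.
rewrite mem_index_iota => /andP [_ /andP [_ lt_mM]].
by rewrite (vanish_belowMl L a_M lt_mM) mul0r.
Qed.

(* Substituting [a = (1 - conj(q_0) q) psi] is a disc automorphism in [q]:
   it removes the constant term of [q] at the price of the positive factor
   [1 - |q_0|^2]. *)
Lemma bform_mobius M L q a (q0 := fcoef q 0) :
  bform M L ((1 - fpsC (conjc q0) * q) * a) ((1 - fpsC (conjc q0) * q) * a)
  - bform M L ((q - fpsC q0) * a) ((q - fpsC q0) * a)
  = (1 - q0 * conjc q0) * (bform M L a a - bform M L (q * a) (q * a)).
Proof.
have -> : (1 - fpsC (conjc q0) * q) * a = a + fpsC (- conjc q0) * (q * a).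
  by rewrite rmorphN; ring.
have -> : (q - fpsC q0) * a = q * a + fpsC (- q0) * a by rewrite rmorphN; ring.
by rewrite !bformDl !bformDr !bformCl !bformCr !rmorphN /= conjcK; ring.
Qed.

Lemma Im_bform_ge0_contraction M L q :
  (forall psi, fcoef psi 0 = 0 ->
     complex.Im (bform M L (q * psi) (q * psi)) <= complex.Im (bform M L psi psi)) ->
  complex.Re (fcoef q 0) ^+ 2 + complex.Im (fcoef q 0) ^+ 2 < 1 ->
  forall phi, fcoef phi 0 = 0 -> 0 <= complex.Im (bform M L phi phi).
Proof.
move=> q_contr q0_lt1; set q0 := fcoef q 0 in q0_lt1 *.
set c := 1 - (complex.Re q0 ^+ 2 + complex.Im q0 ^+ 2).
have c_gt0 : 0 < c by rewrite subr_gt0.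
have cE : 1 - q0 * conjc q0 = c%:C.
  by rewrite /c; case: (q0) => a b /=; simpc; congr (_ +i* _); ring.
set U := 1 - fpsC (conjc q0) * q; set N := q - fpsC q0.
have U0 : fcoef U 0 \is a GRing.unit.
  rewrite unitfE /U fcoefB fcoefM0 fcoef1 fcoefC mul1r mulrC cE.
  by rewrite real_complex_eq0 gt_eqF.
have N0 : fcoef N 0 = 0 by rewrite /N fcoefB fcoefC mul1r subrr.
(* Induction on the number of leading coefficients known to vanish. *)
suff ge0_low d phi : vanish_below (M.+1 - d) phi -> fcoef phi 0 = 0 ->
    0 <= complex.Im (bform M L phi phi).
  by move=> phi; apply: (ge0_low M.+1); rewrite subnn.
elim: d phi => [|d IHd] phi phi_low phi0; first by rewrite bform_vanish ?subn0.
set psi := fps_inv U * phi.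
have Upsi : U * psi = phi by rewrite /psi mulrA fps_mulV // mul1r.
have psi0 : fcoef psi 0 = 0 by rewrite fcoefM0 phi0 mulr0.
have E : bform M L (U * psi) (U * psi) - bform M L (N * psi) (N * psi)
    = (1 - q0 * conjc q0) * (bform M L psi psi - bform M L (q * psi) (q * psi))
  := bform_mobius M L q psi.
have -> : bform M L phi phi = bform M L (N * psi) (N * psi)
    + c%:C * (bform M L psi psi - bform M L (q * psi) (q * psi)).
  by rewrite -cE -E Upsi; ring.
rewrite raddfD /= Im_realM; apply: addr_ge0.
  apply: IHd; last by rewrite fcoefM0 N0 mul0r.
  apply: (@vanish_below_le _ (M.+1 - d.+1).+1); first by lia.
  by apply: vanish_belowM_S => //; apply: vanish_belowMl.
by apply: mulr_ge0; [exact: ltW | rewrite raddfB /= subr_ge0 q_contr].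
Qed.

Section Discretization.
Variables (x w y : R).

Definition Dlin : fps := fpsC (x +i* y) + fpsC (x -i* y) * X.
Definition Klin : fps := fpsC (w -i* (5 * y)) + fpsC (w +i* (5 * y)) * X.

(* Discrete energy identity: the summand telescopes. *)
Lemma Im_energy_sum M (u v : fps) : fcoef u 0 = 0 -> fcoef v 0 = 0 ->
  complex.Im (\sum_(1 <= m < M.+1)
    (fcoef (Dlin * v - Klin * u) m * conjc (fcoef ((1 + X) * u) m)
     + fcoef (Dlin * u - Klin * v) m * conjc (fcoef ((1 + X) * v) m)))
  = y * energy (fcoef u M) (fcoef v M).
Proof.
move=> u0 v0; rewrite raddf_sum big_add1.
rewrite (telescope_sumr_eq (fun k => y * energy (fcoef u k) (fcoef v k))) //.
  by rewrite u0 v0 energy00 mulr0 subr0.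
have S_lin : 1 + X = fpsC 1 + fpsC 1 * X by rewrite rmorph1 mul1r.
move=> k _; cbv beta; rewrite S_lin !fcoefB !fcoef_lin !mul1r.
exact: Im_energy_step.
Qed.

Lemma normq0_lt1 (q0 L0 : C) : 0 < y -> 0 < complex.Im L0 ->
  (x +i* y) * q0 = L0 + (w -i* (5 * y)) ->
  q0 * ((w -i* (5 * y)) - L0) = x +i* y ->
  complex.Re q0 ^+ 2 + complex.Im q0 ^+ 2 < 1.
Proof.
move=> y_gt0 L0_gt0 eq1 eq2.
have L0E : L0 = (x +i* y) * q0 - (w -i* (5 * y)) by rewrite eq1; ring.
have L0q0E : L0 * q0 = q0 * (w -i* (5 * y)) - (x +i* y) by rewrite -eq2; ring.
have E : L0 * (1 - q0 * conjc q0) = (x +i* y) * q0 - (w -i* (5 * y))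
    + (x +i* y) * conjc q0 - (w -i* (5 * y)) * (q0 * conjc q0).
  by rewrite mulrBr mulr1 [L0 * (q0 * _)]mulrA L0q0E L0E; ring.
(* Taking imaginary parts:
   [Im L_0 (1 - |q_0|^2) = y (5 (1 + |q_0|^2) + 2 Re q_0) > 0]. *)
move: E L0_gt0; case: q0 {eq1 eq2 L0E L0q0E} => a b; case: L0 => l1 l2 /=.
move=> /(congr1 (@complex.Im R)) /=; rewrite !expr2 => E l2_gt0.
have E' : l2 * (1 - (a * a + b * b)) = y * (5 * (1 + (a * a + b * b)) + 2 * a) by lra.
have : 0 < y * (5 * (1 + (a * a + b * b)) + 2 * a).
  apply: mulr_gt0 => //; nra.
by rewrite -E' pmulr_rgt0 // subr_gt0.
Qed.

Lemma Im_bform_contraction M (L q psi : fps) : 0 <= y ->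
  Dlin * q = L + Klin -> q * (Klin - L) = Dlin -> fcoef psi 0 = 0 ->
  complex.Im (bform M L (q * psi) (q * psi)) <= complex.Im (bform M L psi psi).
Proof.
move=> y_ge0 Dq qK psi0.
have qpsi0 : fcoef (q * psi) 0 = 0 by rewrite fcoefM0 psi0 mulr0.
have := Im_energy_sum M psi0 qpsi0.
have -> : Dlin * (q * psi) - Klin * psi = L * psi by rewrite mulrA Dq; ring.
have -> : Dlin * psi - Klin * (q * psi) = - (L * (q * psi)) by rewrite -qK; ring.
have -> : \sum_(1 <= m < M.+1)
    (fcoef (L * psi) m * conjc (fcoef ((1 + X) * psi) m)
     + fcoef (- (L * (q * psi))) m * conjc (fcoef ((1 + X) * (q * psi)) m))
    = bform M L psi psi - bform M L (q * psi) (q * psi).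
  by rewrite /bform -sumrB; apply: eq_bigr => m _; rewrite fcoefN mulNr.
rewrite raddfB /= -subr_ge0 => ->.
by rewrite mulr_ge0 ?energy_ge0.
Qed.

Lemma Im_bform_ge0 (L : fps) : 0 < y -> L ^+ 2 = Klin ^+ 2 - Dlin ^+ 2 ->
  0 < complex.Im (fcoef L 0) ->
  forall M (phi : fps), fcoef phi 0 = 0 -> 0 <= complex.Im (bform M L phi phi).
Proof.
move=> y_gt0 LL ImL0_gt0 M.
have D0 : fcoef Dlin 0 = x +i* y := fcoef_lin0 _ _.
have K0 : fcoef Klin 0 = w -i* (5 * y) := fcoef_lin0 _ _.
have D0_unit : fcoef Dlin 0 \is a GRing.unit by rewrite unitfE D0 complex_neq0 ?gt_eqF.
set q := (L + Klin) * fps_inv Dlin.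
have Dq : Dlin * q = L + Klin by rewrite /q mulrCA fps_mulV // mulr1.
(* [q (K - L) = D] because [(L + K)(K - L) = D^2] *)
have qK : q * (Klin - L) = Dlin.
  have : fps_inv Dlin * (Dlin * (q * (Klin - L) - Dlin)) = 0.
    by rewrite mulrBr mulrA Dq -[_ * (Klin - L)]addr0 -(subrr (L ^+ 2)) {2}LL; ring.
  rewrite mulrA [fps_inv _ * _]mulrC fps_mulV // mul1r.
  by move=> /eqP; rewrite subr_eq0 => /eqP.
apply: (@Im_bform_ge0_contraction _ _ q).
  by move=> psi; apply: Im_bform_contraction; rewrite // ltW.
apply: (@normq0_lt1 _ (fcoef L 0)) => //.
  by rewrite -D0 -K0 -fcoefM0 Dq fcoefD.
by rewrite -D0 -K0 -fcoefB -fcoefM0 qK.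
Qed.

End Discretization.
End EnergyEstimate.

(** * The reference kernel [R[W]] *)

Section Argument.
Variable R : realType.
Local Notation C := R[i].

Lemma cabs_sqr (z : C) : cabs z ^+ 2 = complex.Re z ^+ 2 + complex.Im z ^+ 2.
Proof. by rewrite /cabs sqr_sqrtr // addr_ge0 // sqr_ge0. Qed.

Lemma cabs_gt0 (z : C) : z != 0 -> 0 < cabs z.
Proof.
case: z => a b z_neq0; rewrite /cabs /= sqrtr_gt0.
have [a0|a_neq0] := eqVneq a 0.
  have b_neq0 : b != 0 by apply: contra_neq z_neq0 => b0; rewrite a0 b0.
  by rewrite ltr_wpDl ?sqr_ge0 // lt0r sqrf_eq0 b_neq0 sqr_ge0.
by rewrite ltr_wpDr ?sqr_ge0 // lt0r sqrf_eq0 a_neq0 sqr_ge0.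
Qed.

Lemma arg02pi_exists (z : C) : (complex.Im z != 0) || (complex.Re z < 0) ->
  exists t : R, 0 < t < 2 * pi /\ z = (cabs z)%:C * cexpi t.
Proof.
move=> z_off.
have z_neq0 : z != 0.
  by apply: contraTneq z_off => ->; rewrite /= eqxx ltxx.
have s_gt0 := cabs_gt0 z_neq0; have s_sqr := cabs_sqr z.
move: z_off s_sqr s_gt0; set s := cabs z.
case: z {z_neq0} s => a b /= s z_off s_sqr s_gt0.
have s_neq0 : s != 0 by rewrite gt_eqF.
set c := a / s.
have c_sqr : 1 - c ^+ 2 = (b / s) ^+ 2.
  by rewrite /c !expr_div_n s_sqr; field; rewrite -s_sqr sqrf_eq0.
have c_bound : -1 <= c <= 1.
  rewrite -ler_norml -(ler_pXn2r (_ : 0 < 2)%N) ?nnegrE //.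
  by rewrite real_normK ?num_real // expr1n -subr_ge0 c_sqr sqr_ge0.
have c_lt1 : c < 1.
  rewrite lt_neqAle (andP c_bound).2 andbT; apply: contraTneq z_off => c1.
  have b0 : b = 0.
    by apply/eqP; move: c_sqr; rewrite c1 expr1n subrr => /esym/eqP;
       rewrite sqrf_eq0 mulf_eq0 invr_eq0 (negPf s_neq0) orbF.
  have a_s : a = s by rewrite -[a](mulfVK s_neq0) -/c c1 mul1r.
  by rewrite b0 a_s eqxx /= ltNge ltW.
have acos_gt0 : 0 < acos c by apply: acos_gt0; rewrite c_lt1 (andP c_bound).1.
have acos_le_pi : acos c <= pi := acos_lepi c_bound.
have acos_lt_2pi : acos c < 2 * pi.
  by apply: le_lt_trans acos_le_pi _; rewrite ltr_pMl ?pi_gt0 // ltr1n.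
have cos_acos : cos (acos c) = c by apply: acosK; rewrite in_itv.
have sin_acos : sin (acos c) = `|b| / s.
  by rewrite sin_acos // c_sqr sqrtr_sqr normrM (@ger0_norm _ s^-1) // invr_ge0 ltW.
have [b_ge0|b_lt0] := leP 0 b.
  exists (acos c); split; first by rewrite acos_gt0.
  rewrite /cexpi cos_acos sin_acos ger0_norm //; simpc.
  by congr (_ +i* _); rewrite mulrC mulfVK.
exists (2 * pi - acos c); split.
  by rewrite subr_gt0 acos_lt_2pi ltrBlDr ltrDl acos_gt0.
rewrite /cexpi mulr_natl cosB sinB cos2pi sin2pi cos_acos sin_acos ltr0_norm //.
by simpc; congr (_ +i* _); rewrite /c; field.
Qed.

Lemma arg02piP (z : C) : (complex.Im z != 0) || (complex.Re z < 0) ->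
  0 < arg02pi z < 2 * pi /\ z = (cabs z)%:C * cexpi (arg02pi z).
Proof.
move=> /arg02pi_exists z_off; rewrite /arg02pi.
exact: (epsilon_spec (inhabits 0)
          (fun t => 0 < t < 2 * pi /\ z = (cabs z)%:C * cexpi t)).
Qed.

End Argument.

Section ReferenceKernel.
Variable R : realType.
Local Notation C := R[i].
Local Notation fps := (fps C).
Local Notation X := (fpsX C).
Variables (hbar chbar tau h W : R).
Local Notation f := (Rseq hbar chbar tau h W).
Local Notation c1 := (c1coef hbar chbar tau h W).
Local Notation ka := (kappac hbar chbar tau h W).
Local Notation mu := (muc hbar chbar tau h W).
Local Notation alpha := (alphac hbar chbar tau h W).
Local Notation A := (W / (2 * chbar)).
Local Notation B := (hbar / (tau * chbar)).

Lemma Rseq1 : f 1%N = - f 0%N * ka * mu%:C. Proof. by []. Qed.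

Lemma Rseq_rec m : m.+2%:R * f m.+2 =
  (2 * m.+2%:R - 3) * ka * mu%:C * f m.+1 - (m.+2%:R - 3) * ka ^+ 2 * f m.
Proof.
have -> : f m.+2 = ((2 * m.+2%:R - 3) / m.+2%:R)%:C * ka * mu%:C * f m.+1
    - ((m.+2%:R - 3) / m.+2%:R)%:C * ka ^+ 2 * f m.
  by rewrite /Rseq /=; case: (Rpair hbar chbar tau h W m).
set mu' := mu%:C; rewrite !rmorphM !fmorphV !rmorphB !rmorphM !rmorph_nat.
by field; rewrite -[2]/(2%:R) -natrD pnatr_eq0.
Qed.

Lemma alphacE : alpha = (2 * A + 2 / 3 * h ^+ 2 * (A ^+ 2 - B ^+ 2))
                        +i* (2 * B + 2 / 3 * h ^+ 2 * (2 * A * B)).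
Proof.
rewrite /alphac /acoef -[2 : C](rmorph_nat (real_complex R)) expr2 /=.
by simpc; congr (_ +i* _); ring.
Qed.

Lemma alphac_off_halfline : 0 < B -> 0 < h ->
  (complex.Im alpha != 0) || (complex.Re alpha < 0).
Proof.
move=> B_gt0 h_gt0; rewrite alphacE /=.
set k := 2 / 3 * h ^+ 2.
have k_gt0 : 0 < k by rewrite /k mulr_gt0 ?exprn_gt0 //; lra.
case: eqP => //= ImE.
(* [Im alpha = 2 B (1 + k A)], so [1 + k A = 0] and then
   [Re alpha = A - k B^2 < 0]. *)
have kA : 1 + k * A = 0.
  have : 2 * B * (1 + k * A) = 0 by rewrite -ImE; ring.
  by move/eqP; rewrite 2!mulf_eq0 pnatr_eq0 (gt_eqF B_gt0) /= => /eqP.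
have -> : 2 * A + k * (A ^+ 2 - B ^+ 2) = A + A * (1 + k * A) - k * B ^+ 2 by ring.
rewrite kA mulr0 addr0.
have A_lt0 : A < 0 by nra.
have : 0 <= k * B ^+ 2 by rewrite mulr_ge0 ?sqr_ge0 ?ltW.
lra.
Qed.

Lemma c1coef_sqr : c1 ^+ 2 =
  (cabs alpha / 4 * cos (arg02pi alpha)) -i* (cabs alpha / 4 * sin (arg02pi alpha)).
Proof.
rewrite /c1coef /cexpi; set s := cabs alpha; set ph := arg02pi alpha.
set t := - ph / 2; set r := Num.sqrt s.
have tt : t + t = - ph by rewrite /t; field.
have cos_ph : cos ph = cos t ^+ 2 - sin t ^+ 2 by rewrite -cosN -tt cosD !expr2.
have sin_ph : sin ph = - (2 * (sin t * cos t)).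
  by rewrite -[ph]opprK sinN -tt sinD [cos t * _]mulrC mulr_natl mulr2n.
have r_sqr : r ^+ 2 = s by rewrite sqr_sqrtr // sqrtr_ge0.
by rewrite expr2 /=; simpc; rewrite cos_ph sin_ph -r_sqr; congr (_ +i* _); field.
Qed.

Hypotheses (hbar_gt0 : 0 < hbar) (chbar_gt0 : 0 < chbar) (tau_gt0 : 0 < tau)
  (h_gt0 : 0 < h).

Let B_gt0 : 0 < B. Proof. by rewrite divr_gt0 ?mulr_gt0. Qed.

Lemma alphac_polar : 0 < cabs alpha /\
  complex.Re alpha = cabs alpha * cos (arg02pi alpha) /\
  complex.Im alpha = cabs alpha * sin (arg02pi alpha).
Proof.
have alpha_off := alphac_off_halfline B_gt0 h_gt0.
have [_ alphaE] := arg02piP alpha_off.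
split; last by split; rewrite {1}alphaE /cexpi /=; ring.
by apply: cabs_gt0; apply: contraTneq alpha_off => ->; rewrite /= eqxx ltxx.
Qed.

Lemma Rseq_quad_factor :
  fpsC ((4 / h ^+ 2)%:C * c1 ^+ 2) * fps_quad 1 (- 2 * ka * mu%:C) (ka ^+ 2)
  = Klin (1 / h ^+ 2 + 5 * A / 6) (B / 6) ^+ 2
    - Dlin (1 / h ^+ 2 - A / 6) (B / 6) ^+ 2.
Proof.
have [s_gt0 [Re_alpha Im_alpha]] := alphac_polar; have c1_sqr := c1coef_sqr.
set s := cabs alpha in s_gt0 Re_alpha Im_alpha c1_sqr.
set co := cos _ in Re_alpha c1_sqr; set si := sin _ in Im_alpha c1_sqr.
rewrite alphacE /= in Re_alpha Im_alpha.
have muE : mu = (2 * A + 2 / 3 * h ^+ 2 * (A ^+ 2 + B ^+ 2)) / s.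
  by rewrite /muc /betac /acoef cabs_sqr.
have kaE : ka = - (co +i* si) by [].
have cs1 : co ^+ 2 + si ^+ 2 = 1 by rewrite cos2Dsin2.
have m2 : (-2 : C) = (-2)%:C by rewrite rmorphN rmorph_nat.
rewrite fpsC_quad /Klin /Dlin sqr_lin_sub c1_sqr kaE muE m2.
congr fps_quad; simpc; congr (_ +i* _).
- transitivity (s * co / h ^+ 2); first by field; rewrite ?gt_eqF.
  by rewrite -Re_alpha; field; rewrite ?gt_eqF.
- transitivity (- (s * si) / h ^+ 2); first by field; rewrite ?gt_eqF.
  by rewrite -Im_alpha; field; rewrite ?gt_eqF.
- transitivity (2 * (2 * A + 2 / 3 * h ^+ 2 * (A ^+ 2 + B ^+ 2)) / h ^+ 2
                * (co ^+ 2 + si ^+ 2)); first by field; rewrite ?gt_eqF.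
  by rewrite cs1 mulr1; field; rewrite ?gt_eqF.
- by field; rewrite ?gt_eqF.
- transitivity (s * co / h ^+ 2 * (co ^+ 2 + si ^+ 2)); first by field; rewrite ?gt_eqF.
  by rewrite cs1 mulr1 -Re_alpha; field; rewrite ?gt_eqF.
- transitivity (s * si / h ^+ 2 * (co ^+ 2 + si ^+ 2)); first by field; rewrite ?gt_eqF.
  by rewrite cs1 mulr1 -Im_alpha; field; rewrite ?gt_eqF.
Qed.

Lemma Im_c1coef_gt0 : 0 < complex.Im c1.
Proof.
have [/andP [arg_gt0 arg_lt2pi] _] := arg02piP (alphac_off_halfline B_gt0 h_gt0).
have [s_gt0 _] := alphac_polar.
rewrite /c1coef /cexpi /=; set s := cabs _ in s_gt0 *.
set ph := arg02pi _ in arg_gt0 arg_lt2pi *.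
rewrite [- ph / 2]mulNr sinN cosN.
have -> : - (Num.sqrt s / 2) * - sin (ph / 2) + - 0 * cos (ph / 2)
    = Num.sqrt s / 2 * sin (ph / 2) by ring.
apply: mulr_gt0; first by rewrite divr_gt0 // (sqrtr_gt0 s).
apply: sin_gt0_pi.
by rewrite divr_gt0 //= ltr_pdivrMr // mulrC.
Qed.

Theorem Im_dconv_Rseq_ge0 (phi : nat -> C) (M : nat) : phi 0%N = 0 ->
  0 <= complex.Im (\sum_(1 <= m < M.+1)
     dconv f phi m * conjc ((phi m.-1 + phi m) / 2)).
Proof.
move=> phi0; set L := fpsC (2 / h)%:C * Fps f.
have LL : L ^+ 2 = Klin (1 / h ^+ 2 + 5 * A / 6) (B / 6) ^+ 2
                   - Dlin (1 / h ^+ 2 - A / 6) (B / 6) ^+ 2.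
  rewrite -Rseq_quad_factor /L exprMn -(rmorphXn (@fpsC C)).
  rewrite (fps_sqr_recurrence Rseq1 Rseq_rec) mulrA -rmorphM.
  rewrite -(rmorphXn (real_complex R)).
  by congr (fpsC (_%:C * _) * _); field; rewrite ?gt_eqF.
have ImL0_gt0 : 0 < complex.Im (fcoef L 0).
  by rewrite /L fcoefCM Im_realM mulr_gt0 ?divr_gt0 ?Im_c1coef_gt0.
have := Im_bform_ge0 (divr_gt0 B_gt0 (ltr0n _ 6)) LL ImL0_gt0 M
  (phi := Fps phi) phi0.
suff -> : bform M L (Fps phi) (Fps phi) = (4 / h)%:C * \sum_(1 <= m < M.+1)
    dconv f phi m * conjc ((phi m.-1 + phi m) / 2).
  by rewrite Im_realM pmulr_rge0 // divr_gt0.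
rewrite /bform mulr_sumr; apply: eq_big_nat => -[//|m] _.
rewrite /L -mulrA fcoefCM -[fcoef (Fps f * _) _]/(dconv f phi _).
rewrite [(1 + _) * _]mulrDl mul1r fcoefD fcoefXM /= conjc_mid [conjc (_ + _)]rmorphD.
have -> : (4 / h)%:C = 2 * (2 / h)%:C :> C.
  rewrite -(rmorph_nat (real_complex R) 2) -rmorphM.
  by congr _%:C; field; rewrite gt_eqF.
by field; apply/eqP => -[/eqP]; rewrite gt_eqF.
Qed.

End ReferenceKernel.

(** * Diagonalization by the discrete sine transform *)

Section Diagonalization.
Variables (R : realType) (n : nat) (X : nat -> R) (J : nat -> nat).
Local Notation C := R[i].
Local Notation I := (midx n J).

Definition cell_vol : R := \prod_(k < n.-1) hstep X J k.+2.
Definition dst_const : R := \prod_(k < n.-1) (2 / (J k.+2)%:R).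

Lemma sigmak_ge0 l q : 0 <= sigmak X J l q.
Proof.
rewrite /sigmak; set t := pi * _ * _ / _.
have : sin t ^+ 2 <= 1 by rewrite -(cos2Dsin2 t) lerDr sqr_ge0.
lra.
Qed.

Lemma dstE (P : I -> C) q :
  dst P q = dst_const%:C * \sum_(j | interior j) P j * (@sinprod R n J q j)%:C.
Proof. by []. Qed.

Lemma ip_idst (P W : I -> C) : ip X (idst P) W =
  cell_vol%:C * \sum_(q | interior q)
    P q * conjc (\sum_(j | interior j) W j * (@sinprod R n J q j)%:C).
Proof.
rewrite /ip /idst mulr_sumr; under eq_bigr do rewrite !mulr_suml.
rewrite exchange_big /=; apply: eq_bigr => q _.
rewrite conjc_sum !mulr_sumr; apply: eq_bigr => j _.
by rewrite conjcM conjc_real /cell_vol; ring.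
Qed.

Lemma dst_mid (P Q : I -> C) q :
  dst (fun j => (P j + Q j) / 2) q = (dst P q + dst Q q) / 2.
Proof.
rewrite !dstE -mulrDr -big_split -mulrA; congr (_ * _).
by rewrite mulr_suml; apply: eq_bigr => j _ /=; ring.
Qed.

Lemma ip_Sref_diag (hbar chbar Vinf tau : R) (Phi : nat -> I -> C) m :
  dst_const != 0 ->
  ip X (Sref X hbar chbar Vinf tau Phi m) (fun j => (Phi m.-1 j + Phi m j) / 2)
    * tau%:C
  = \sum_(q | interior q)
      (cell_vol * tau * (\prod_(k < n.-1) sigmak X J k.+2 (q k)) / dst_const)%:C
      * (dconv (Rseq hbar chbar tau (hstep X J 1) (Vq X chbar Vinf q))
               (fun p => dst (Phi p) q) m
         * conjc ((dst (Phi m.-1) q + dst (Phi m) q) / 2)).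
Proof.
move=> D_neq0; have DC_neq0 : dst_const%:C != 0 :> C by rewrite real_complex_eq0.
rewrite /Sref ip_idst mulr_sumr mulr_suml; apply: eq_bigr => q _.
have -> : \sum_(j | interior j) (Phi m.-1 j + Phi m j) / 2 * (@sinprod R n J q j)%:C
    = ((dst (Phi m.-1) q + dst (Phi m) q) / 2) / dst_const%:C.
  by rewrite -dst_mid dstE [_%:C * _]mulrC mulfK.
by rewrite conjcM conjc_inv conjc_real !rmorphM fmorphV; field.
Qed.

End Diagonalization.

Theorem lemma4p1 (R : realType) (n : nat) (hbar chbar Vinf tau : R)
  (X : nat -> R) (J : nat -> nat) (Phi : nat -> midx n J -> R[i]) (M : nat) :
  (2 <= n)%N -> 0 < hbar -> 0 < chbar -> 0 < tau ->
  (forall l, (1 <= l <= n)%N -> 0 < X l) ->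
  (forall l, (1 <= l <= n)%N -> (2 <= J l)%N) ->
  (forall j, interior j -> Phi 0%N j = 0) ->
  (1 <= M)%N ->
  0 <= complex.Im
    (\sum_(1 <= m < M.+1)
       ip X (Sref X hbar chbar Vinf tau Phi m)
            (fun j => (Phi m.-1 j + Phi m j) / 2) * tau%:C).
Proof.
move=> n_ge2 hbar_gt0 chbar_gt0 tau_gt0 X_gt0 J_ge2 Phi0 _.
have J_gt0 l : (1 <= l <= n)%N -> 0 < (J l)%:R :> R.
  by move=> /J_ge2 J_l; rewrite ltr0n (leq_trans _ J_l).
have h_gt0 l : (1 <= l <= n)%N -> 0 < hstep X J l.
  by move=> l_n; rewrite divr_gt0 ?X_gt0 ?J_gt0.
have transverse (k : 'I_n.-1) : (1 <= k.+2 <= n)%N by have := ltn_ord k; lia.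
have vol_gt0 : 0 < @cell_vol R n X J by rewrite prodr_gt0 // => k _; apply: h_gt0.
have D_gt0 : 0 < @dst_const R n J.
  by rewrite prodr_gt0 // => k _; rewrite divr_gt0 ?J_gt0.
under eq_bigr do rewrite ip_Sref_diag ?gt_eqF //.
rewrite exchange_big raddf_sum /=; apply: sumr_ge0 => q _.
rewrite -mulr_sumr Im_realM; apply: mulr_ge0.
  apply: divr_ge0; last exact: ltW.
  apply: mulr_ge0; last by apply: prodr_ge0 => k _; apply: sigmak_ge0.
  by apply: mulr_ge0; apply: ltW.
apply: Im_dconv_Rseq_ge0 => //; first by apply: h_gt0; lia.
by rewrite dstE big1 ?mulr0 // => j /Phi0 ->; rewrite mul0r.
Qed.
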